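(* Let $C$ be a normal, closed cone with nonempty interior in a real Banach space. If $f:\operatorname{int} C\to\operatorname{int} C$ is $\tau$-condensing, then $\alpha f+(1-\alpha)\operatorname{id}$ is $\tau$-condensing for every $0<\alpha<1$.
   Context: A closed cone $C$ (closed convex, $\lambda C\subseteq C$ for $\lambda\ge0$, $C\cap(-C)=\{0\}$) induces the order $x\le y$ iff $y-x\in C$. $C$ is normal if there is $\kappa$ with $\|x\|\le\kappa\|y\|$ whenever $0\le x\le y$. Thompson's metric on $\operatorname{int}C$: $d_T(x,y)=\log\inf\{\beta\ge1:\beta^{-1}x\le y\le\beta x\}$. For a $d_T$-bounded set $A\subseteq\operatorname{int}C$, $\tau(A)=\inf\{d>0: A$ has a finite cover by sets of $d_T$-diameter $\le d\}$. A continuous map $f:D\to\operatorname{int}C$ ($D\subseteq\operatorname{int}C$) is $\tau$-condensing if $\tau(f(A))<\tau(A)$ for every $d_T$-bounded $A\subseteq D$ with $\tau(A)>0$. *)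

From HB Require Import structures.
From mathcomp Require Import all_boot all_order all_algebra.
From mathcomp Require Import all_classical all_reals all_analysis.
Set Implicit Arguments. Unset Strict Implicit. Unset Printing Implicit Defensive.
Import Order.TTheory GRing.Theory Num.Theory.
Import numFieldNormedType.Exports.
Local Open Scope classical_set_scope.
Local Open Scope ring_scope.

Section Thompson.
Variables (R : realType) (V : normedModType R).

Definition closed_cone (C : set V) : Prop :=
  [/\ closed C,
      (forall x y (t : R), C x -> C y -> 0 <= t -> t <= 1 ->
         C (t *: x + (1 - t) *: y)),
      (forall (l : R) x, 0 <= l -> C x -> C (l *: x)) &
      (forall x, C x -> C (- x) -> x = 0)].

Definition cone_le (C : set V) (x y : V) : Prop := C (y - x).

Definition normal_cone (C : set V) : Prop :=
  exists kappa : R, forall x y : V,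
    cone_le C 0 x -> cone_le C x y -> `|x| <= kappa * `|y|.

Definition thompson (C : set V) (x y : V) : R :=
  ln (inf [set b : R | 1 <= b /\ cone_le C (b^-1 *: x) y /\ cone_le C y (b *: x)]).

Definition dT_bounded (C : set V) (A : set V) : Prop :=
  exists M : R, forall x y, A x -> A y -> thompson C x y <= M.

Definition has_finite_cover (C : set V) (A : set V) (d : R) : Prop :=
  exists (n : nat) (B : 'I_n -> set V),
    [/\ (forall i, B i `<=` interior C),
        (forall a, A a -> exists i, B i a) &
        (forall i x y, B i x -> B i y -> thompson C x y <= d)].

(* Kuratowski-type measure of noncompactness w.r.t. d_T (extended-real
   valued; +oo when no finite cover exists). *)
Definition tau (C : set V) (A : set V) : \bar R :=
  ereal_inf [set d%:E | d in [set d : R | 0 < d /\ has_finite_cover C A d]].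

Definition dT_continuous_on (C : set V) (D : set V) (f : V -> V) : Prop :=
  forall x, D x -> forall e : R, 0 < e -> exists2 del : R, 0 < del &
    forall y, D y -> thompson C x y < del -> thompson C (f x) (f y) < e.

Definition tau_condensing (C : set V) (D : set V) (f : V -> V) : Prop :=
  [/\ (forall x, D x -> interior C (f x)),
      dT_continuous_on C D f &
      (forall A, A `<=` D -> dT_bounded C A -> (0 < tau C A)%E ->
         (tau C (f @` A) < tau C A)%E)].

End Thompson.

From HB Require Import structures.
From mathcomp Require Import all_boot all_order all_algebra.
From mathcomp Require Import all_classical all_reals all_analysis.
From mathcomp Require Import ring lra.
Set Implicit Arguments. Unset Strict Implicit. Unset Printing Implicit Defensive.
Import Order.TTheory GRing.Theory Num.Theory.
Import numFieldNormedType.Exports.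
Local Open Scope classical_set_scope.
Local Open Scope ring_scope.

(* Let C be a cone, d_T Thompson's metric on int C and g = al f + (1 - al) id
   with 0 < al < 1.  Both
     sets are order-bounded (cover_lower_bound and boundedness of A), which
     yields k x <= u for u in f(A), x in A.  This one-sided bound makes the
     combined cells strictly smaller than the cells of A
     (thompson_set_mix_improved, cover_mix), so tau(g A) < tau(A)
     (tau_mix_lt). *)

(* Proves an identity between linear combinations of the vectors u, v, x, y
   (a vector may be repeated when fewer are involved): both sides are
   normalised to the form a *: u + b *: v + c *: x + d *: y, leaving one scalar
   identity per coefficient. *)
Ltac lincomb_eq u v x y :=
  let F := fresh "F" in let FD := fresh "FD" in
  let FZ := fresh "FZ" in let FN := fresh "FN" in
  let Eu := fresh "Eu" in let Ev := fresh "Ev" in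
  let Ex := fresh "Ex" in let Ey := fresh "Ey" in
  pose F := fun a b c d => a *: u + b *: v + c *: x + d *: y;
  have FD : forall a b c d a' b' c' d',
      F a b c d + F a' b' c' d' = F (a + a') (b + b') (c + c') (d + d');
    first (by move=> *; rewrite /F !scalerDl addrACA; congr (_ + _);
                 rewrite addrACA; congr (_ + _); rewrite addrACA);
  have FZ : forall k a b c d, k *: F a b c d = F (k * a) (k * b) (k * c) (k * d);
    first (by move=> *; rewrite /F !scalerDr !scalerA);
  have FN : forall a b c d, - F a b c d = F (- a) (- b) (- c) (- d);
    first (by move=> *; rewrite /F !opprD !scaleNr);
  have Eu : u = F 1 0 0 0; first (by rewrite /F scale1r !scale0r !addr0);
  have Ev : v = F 0 1 0 0; first (by rewrite /F scale1r !scale0r addr0 add0r addr0);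
  have Ex : x = F 0 0 1 0; first (by rewrite /F scale1r !scale0r !add0r addr0);
  have Ey : y = F 0 0 0 1; first (by rewrite /F scale1r !scale0r !add0r);
  try rewrite Eu; try rewrite Ev; try rewrite Ex; try rewrite Ey;
  clear Eu Ev Ex Ey;
  rewrite !(FZ, FN, FD); clear FZ FN FD; congr F.

Section ThompsonCone.
Variables (R : realType) (V : normedModType R) (C : set V).

Hypothesis C_conv : forall x y (t : R), C x -> C y -> 0 <= t -> t <= 1 ->
  C (t *: x + (1 - t) *: y).
Hypothesis C_scale : forall (l : R) x, 0 <= l -> C x -> C (l *: x).

Lemma cone_add x y : C x -> C y -> C (x + y).
Proof.
move=> Cx Cy; have half : C (2^-1 *: x + (1 - 2^-1) *: y).
  by apply: C_conv => //; rewrite invf_le1 ?ler1n.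
have -> : x + y = 2 *: (2^-1 *: x + (1 - 2^-1) *: y) by lincomb_eq x y x y; field.
exact: C_scale.
Qed.

Lemma cone_le_trans x y z : cone_le C x y -> cone_le C y z -> cone_le C x z.
Proof.
move=> xy yz; rewrite /cone_le.
have -> : z - x = (z - y) + (y - x) by rewrite addrA subrK.
exact: cone_add.
Qed.

Lemma cone_leZ (l : R) x y : 0 <= l -> cone_le C x y -> cone_le C (l *: x) (l *: y).
Proof. by move=> l0 xy; rewrite /cone_le -scalerBr; apply: C_scale. Qed.

Lemma cone_le_scaler (l l' : R) x : C x -> l <= l' -> cone_le C (l *: x) (l' *: x).
Proof. by move=> Cx ll'; rewrite /cone_le -scalerBl; apply: C_scale; rewrite ?subr_ge0. Qed.

Lemma cone_le_mix (al : R) a b c d : 0 <= al -> al <= 1 ->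
  cone_le C a b -> cone_le C c d ->
  cone_le C (al *: a + (1 - al) *: c) (al *: b + (1 - al) *: d).
Proof.
move=> al0 al1 ab cd; rewrite /cone_le.
have -> : al *: b + (1 - al) *: d - (al *: a + (1 - al) *: c)
    = al *: (b - a) + (1 - al) *: (d - c) by lincomb_eq a b c d; ring.
exact: C_conv.
Qed.

Lemma cone_le_invZ (b : R) x y : 0 < b ->
  cone_le C (b^-1 *: x) y <-> cone_le C x (b *: y).
Proof.
move=> b0; rewrite /cone_le; split => h.
- have -> : b *: y - x = b *: (y - b^-1 *: x) by lincomb_eq x y x y; field; rewrite gt_eqF.
  by apply: C_scale; rewrite ?ltW.
- have -> : y - b^-1 *: x = b^-1 *: (b *: y - x) by lincomb_eq x y x y; field; rewrite gt_eqF.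
  by apply: C_scale; rewrite ?invr_ge0 ?ltW.
Qed.

Lemma interiorP x :
  interior C x <-> exists2 r : R, 0 < r & forall z, `|x - z| < r -> C z.
Proof.
rewrite /interior /= nbhs_ballP; split => -[r r0 H]; exists r => // z.
- by move=> zr; apply: H; rewrite -ball_normE.
- by rewrite -ball_normE; exact: H.
Qed.

Lemma interior_mix x y (t : R) : interior C x -> C y -> 0 < t -> t <= 1 ->
  interior C (t *: x + (1 - t) *: y).
Proof.
move=> /interiorP[r r0 Hr] Cy t0 t1; apply/interiorP.
exists (t * r) => [|z hz]; first exact: mulr_gt0.
have -> : z = t *: (x - t^-1 *: (t *: x + (1 - t) *: y - z)) + (1 - t) *: y.
  by lincomb_eq x y z z; field; rewrite gt_eqF.
apply: C_conv => //; last exact: ltW.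
apply: Hr; have -> : x - (x - t^-1 *: (t *: x + (1 - t) *: y - z))
    = t^-1 *: (t *: x + (1 - t) *: y - z) by rewrite opprB addrC subrK.
by rewrite normrZ gtr0_norm ?invr_gt0 // ltr_pdivrMl.
Qed.

Lemma interior_absorbing x y : interior C x ->
  exists2 s : R, 0 < s & cone_le C (s *: y) x.
Proof.
move=> /interiorP[r r0 Hr]; have ny : 0 < `|y| + 1 by rewrite ltr_wpDl.
exists (r / (2 * (`|y| + 1))); first by rewrite divr_gt0 // mulr_gt0.
apply: Hr; rewrite opprB addrC subrK normrZ gtr0_norm ?divr_gt0 ?mulr_gt0 //.
have -> : r / (2 * (`|y| + 1)) * `|y| = r / 2 * (`|y| / (`|y| + 1)).
  by field; rewrite gt_eqF.
have : `|y| / (`|y| + 1) < 1 by rewrite ltr_pdivrMr // mul1r ltrDl.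
have : 0 <= `|y| / (`|y| + 1) by rewrite divr_ge0 // ltW.
nra.
Qed.

Definition thompson_set x y : set R :=
  [set b : R | 1 <= b /\ cone_le C (b^-1 *: x) y /\ cone_le C y (b *: x)].

Lemma thompson_setP x y b : thompson_set x y b <->
  [/\ 1 <= b, cone_le C y (b *: x) & cone_le C x (b *: y)].
Proof.
split=> [[b1 [yx xy]] | [b1 xy yx]].
- by split=> //; apply/cone_le_invZ => //; lra.
- by split=> //; split=> //; apply/cone_le_invZ => //; lra.
Qed.

Lemma thompson_set_ge1 x y : lbound (thompson_set x y) 1.
Proof. by move=> b []. Qed.

Lemma thompson_set_up x y b b' : C x -> C y ->
  thompson_set x y b -> b <= b' -> thompson_set x y b'.
Proof.
move=> Cx Cy /thompson_setP[b1 yx xy] bb'; apply/thompson_setP; split; first lra.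
- by apply: cone_le_trans yx _; exact: cone_le_scaler.
- by apply: cone_le_trans xy _; exact: cone_le_scaler.
Qed.

Lemma thompson_set_n0 x y : interior C x -> interior C y ->
  thompson_set x y !=set0.
Proof.
move=> ix iy; have [s1 s10 xy] := interior_absorbing x iy.
have [s2 s20 yx] := interior_absorbing y ix.
pose s := Num.min (Num.min s1 s2) 1.
have s0 : 0 < s by rewrite /s !lt_min s10 s20 ltr01.
have Cx := interior_subset ix; have Cy := interior_subset iy.
exists s^-1; apply/thompson_setP; split; first by rewrite invf_ge1 // ge_min lexx orbT.
- apply/cone_le_invZ; rewrite ?invrK ?invr_gt0 //.
  by apply: cone_le_trans yx; apply: cone_le_scaler; rewrite // /s !ge_min lexx !orbT.
- apply/cone_le_invZ; rewrite ?invrK ?invr_gt0 //.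
  by apply: cone_le_trans xy; apply: cone_le_scaler; rewrite // /s !ge_min lexx.
Qed.

Lemma thompson_le_ln x y b : thompson_set x y b -> thompson C x y <= ln b.
Proof.
move=> hb; have i1 : 1 <= inf (thompson_set x y).
  by apply: lb_le_inf; [exists b | exact: thompson_set_ge1].
have ib : inf (thompson_set x y) <= b.
  by apply: ge_inf => //; exists 1; exact: thompson_set_ge1.
by rewrite /thompson ler_ln // posrE; [lra | case: hb; lra].
Qed.

Lemma thompson_lt_expR x y (e : R) : interior C x -> interior C y ->
  thompson C x y < e -> thompson_set x y (expR e).
Proof.
move=> ix iy; have ne := thompson_set_n0 ix iy.
have i1 : 1 <= inf (thompson_set x y).
  by apply: lb_le_inf => //; exact: thompson_set_ge1.
rewrite /thompson -ltr_expR lnK ?posrE; last lra.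
move=> /(inf_lt ne)[b hb bel].
apply: thompson_set_up hb _; [exact: interior_subset | exact: interior_subset | exact: ltW].
Qed.

Lemma thompson_set_mix u v x y (al b : R) : 0 <= al -> al <= 1 ->
  thompson_set u v b -> thompson_set x y b ->
  thompson_set (al *: u + (1 - al) *: x) (al *: v + (1 - al) *: y) b.
Proof.
move=> al0 al1 /thompson_setP[b1 vu uv] /thompson_setP[_ yx xy].
have scale_mix (p q : V) : al *: (b *: p) + (1 - al) *: (b *: q)
    = b *: (al *: p + (1 - al) *: q) by lincomb_eq p q p q; ring.
apply/thompson_setP; split=> //; rewrite -scale_mix; exact: cone_le_mix.
Qed.

Lemma thompson_mix_lt u v x y (al e : R) :
  interior C u -> interior C v -> interior C x -> interior C y ->
  0 <= al -> al <= 1 -> thompson C u v < e -> thompson C x y < e ->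
  thompson C (al *: u + (1 - al) *: x) (al *: v + (1 - al) *: y) < e.
Proof.
move=> iu iv ix iy al0 al1 duv dxy.
pose m := Num.max (thompson C u v) (thompson C x y).
have um : thompson C u v <= m by rewrite le_max lexx.
have xm : thompson C x y <= m by rewrite le_max lexx orbT.
have me : m < e by rewrite gt_max duv dxy.
pose e' := (m + e) / 2.
have e'e : e' < e by rewrite /e'; lra.
apply: le_lt_trans e'e; rewrite -[e']expRK.
by apply/thompson_le_ln/thompson_set_mix => //; apply: thompson_lt_expR => //;
  rewrite /e'; lra.
Qed.

(* Weight of the improvement obtained from a lower bound k x <= u. *)
Definition mix_weight (al k : R) : R := al * k / (al * k + (1 - al)).

Lemma mix_denom_gt0 (al k : R) : 0 <= al -> al <= 1 -> 0 < k ->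
  0 < al * k + (1 - al).
Proof.
move=> al0 al1 k0; have [al_lt1 | al_eq1] := ltP al 1.
- by have := mulr_ge0 al0 (ltW k0); lra.
- have -> : al = 1 by lra.
  by rewrite mul1r subrr addr0.
Qed.

Lemma mix_weight_ge0 (al k : R) : 0 <= al -> al <= 1 -> 0 < k ->
  0 <= mix_weight al k.
Proof.
move=> al0 al1 k0; apply: divr_ge0; first exact: mulr_ge0 al0 (ltW k0).
exact/ltW/mix_denom_gt0.
Qed.

Lemma mix_weight_le1 (al k : R) : 0 <= al -> al <= 1 -> 0 < k ->
  mix_weight al k <= 1.
Proof.
move=> al0 al1 k0; rewrite /mix_weight ler_pdivrMr ?mix_denom_gt0 //; lra.
Qed.

Lemma mix_weight_gt0 (al k : R) : 0 < al -> al <= 1 -> 0 < k ->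
  0 < mix_weight al k.
Proof.
move=> al0 al1 k0; apply: divr_gt0; first exact: mulr_gt0.
exact: mix_denom_gt0 (ltW al0) al1 k0.
Qed.

(* Indeed the difference of the two sides is
   al (b1 u - u') + (1 - al) (b2 x - x')
     + (b2 - b1) al (1 - al) / (al k + 1 - al) (u - k x). *)
Lemma mix_le_improved u u' x x' (al k b1 b2 : R) :
  0 <= al -> al <= 1 -> 0 < k -> b1 <= b2 ->
  cone_le C u' (b1 *: u) -> cone_le C x' (b2 *: x) -> cone_le C (k *: x) u ->
  cone_le C (al *: u' + (1 - al) *: x')
    (((1 - mix_weight al k) * b2 + mix_weight al k * b1) *: (al *: u + (1 - al) *: x)).
Proof.
move=> al0 al1 k0 b12 uu' xx' xu; have den := mix_denom_gt0 al0 al1 k0.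
rewrite /cone_le /mix_weight in uu' xx' xu *.
have -> : ((1 - al * k / (al * k + (1 - al))) * b2 + al * k / (al * k + (1 - al)) * b1)
            *: (al *: u + (1 - al) *: x) - (al *: u' + (1 - al) *: x')
    = (al *: (b1 *: u - u') + (1 - al) *: (b2 *: x - x'))
      + ((b2 - b1) * (al * (1 - al) / (al * k + (1 - al)))) *: (u - k *: x).
  by lincomb_eq u u' x x'; field; rewrite gt_eqF.
apply: cone_add; first exact: C_conv.
apply: C_scale => //; apply: mulr_ge0; first by rewrite subr_ge0.
by apply: divr_ge0; [apply: mulr_ge0; lra | exact: ltW].
Qed.

Lemma thompson_set_mix_improved u u' x x' (al k b1 b2 : R) :
  0 <= al -> al <= 1 -> 0 < k -> b1 <= b2 ->
  thompson_set u u' b1 -> thompson_set x x' b2 ->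
  cone_le C (k *: x) u -> cone_le C (k *: x') u' ->
  thompson_set (al *: u + (1 - al) *: x) (al *: u' + (1 - al) *: x')
    ((1 - mix_weight al k) * b2 + mix_weight al k * b1).
Proof.
move=> al0 al1 k0 b12 /thompson_setP[b1_ge1 u'u uu'] /thompson_setP[_ x'x xx'] xu x'u'.
have c0 := mix_weight_ge0 al0 al1 k0; have c1 := mix_weight_le1 al0 al1 k0.
apply/thompson_setP; split; [nra | exact: mix_le_improved | exact: mix_le_improved].
Qed.

Lemma tau_le_cover A (d : R) : 0 < d -> has_finite_cover C A d ->
  (tau C A <= d%:E)%E.
Proof. by move=> d0 cov; apply: ereal_inf_lbound; exists d. Qed.

Lemma cover_of_tau_lt A (r : R) : (tau C A < r%:E)%E ->
  exists d : R, [/\ 0 < d, d < r & has_finite_cover C A d].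
Proof.
by move=> /ereal_inf_lt[_ [d [d0 cov] <-]]; rewrite lte_fin => dr; exists d.
Qed.

Lemma cover_sub A B (d : R) : B `<=` A -> has_finite_cover C A d ->
  has_finite_cover C B d.
Proof.
move=> BA [n [cell [cellI cover diam]]]; exists n, cell; split=> // b Bb.
exact/cover/BA.
Qed.

Lemma cover_single A (d : R) : A `<=` interior C ->
  (forall x y, A x -> A y -> thompson C x y <= d) -> has_finite_cover C A d.
Proof. by move=> AI diam; exists 1%N, (fun=> A); split=> // a Aa; exists ord0. Qed.

(* The empty set has covers of every diameter, hence tau = 0. *)
Lemma tau_gt0_nonempty A : (0 < tau C A)%E -> A !=set0.
Proof.
move=> tA; apply/set0P/negP => /eqP A0; move: tA; apply/negP; rewrite -leNgt.
apply/lee_addgt0Pr => e e0; rewrite add0e; apply: tau_le_cover => //.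
by apply: cover_single; rewrite A0.
Qed.

Lemma tau_bounded_fin A : A `<=` interior C -> dT_bounded C A ->
  (0 < tau C A)%E -> exists2 t : R, 0 < t & tau C A = t%:E.
Proof.
move=> AI [M hM] tA; have tle : (tau C A <= (`|M| + 1)%:E)%E.
  apply: tau_le_cover; first by rewrite ltr_wpDl.
  apply: cover_single => // x y Ax Ay.
  by have := hM x y Ax Ay; have := ler_norm M; lra.
move: tA tle; case: (tau C A) => [t | |] //= t0 _.
by exists t; rewrite // -lte_fin.
Qed.

(* A nonempty set B in int C of d_T-diameter at most d is bounded below by a
   positive multiple of any interior point x0: every u in B dominates
   exp(-(d+1)) r for a fixed r in B, and r dominates a multiple of x0. *)
Lemma cell_lower_bound (B : set V) x0 r (d : R) : interior C x0 ->
  B `<=` interior C -> B r -> (forall x y, B x -> B y -> thompson C x y <= d) ->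
  exists2 m : R, 0 < m & forall u, B u -> cone_le C (m *: x0) u.
Proof.
move=> ix0 BI Br diam; have ir := BI r Br.
have [b /thompson_setP[b1 _ x0r]] := thompson_set_n0 ix0 ir.
pose g := expR (d + 1); have g0 : 0 < g := expR_gt0 _.
exists (g^-1 * b^-1) => [|u Bu]; first by rewrite mulr_gt0 ?invr_gt0 //; lra.
have /thompson_setP[_ _ ru] : thompson_set r u g.
  by apply: thompson_lt_expR; [| exact: BI |]; first exact: ir;
     have := diam r u Br Bu; lra.
rewrite -scalerA; apply: cone_le_trans (_ : cone_le C (g^-1 *: r) u).
  by apply: cone_leZ; [rewrite invr_ge0 ltW | apply/cone_le_invZ => //; lra].
by apply/cone_le_invZ.
Qed.

Lemma cover_lower_bound E (d : R) x0 : has_finite_cover C E d -> interior C x0 ->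
  exists2 m : R, 0 < m & forall u, E u -> cone_le C (m *: x0) u.
Proof.
move=> [n [cell [cellI cover diam]]] ix0.
have cellm i : exists m : R, 0 < m /\ forall u, cell i u -> cone_le C (m *: x0) u.
  have [[r ri] | none] := pselect (cell i !=set0).
    by have [m m0 hm] := cell_lower_bound ix0 (cellI i) ri (diam i); exists m.
  by exists 1; split=> // u ui; exfalso; apply: none; exists u.
have [mf hmf] := choice cellm.
exists (\big[Num.min/1]_(i < n) mf i) => [|u /cover[i ui]].
  by apply: lt_bigmin => // i _; case: (hmf i).
apply: cone_le_trans (proj2 (hmf i) u ui); apply: cone_le_scaler.
  exact: interior_subset.
exact: bigmin_le_cond.
Qed.

(* Covering the set of combinations al u + (1 - al) x, u in P, x in A, by the
   pairwise combinations of cells of finite covers of P and A: under a lower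
   bound k x <= u, the cells have diameter at most ln of the improved
   constant of thompson_set_mix_improved. *)
Lemma cover_mix (P A : set V) (al k d1 d2 e1 e2 : R) :
  0 < al -> al <= 1 -> 0 < k -> e1 <= e2 -> d1 < e1 -> d2 < e2 ->
  (forall u x, P u -> A x -> cone_le C (k *: x) u) ->
  has_finite_cover C P d1 -> has_finite_cover C A d2 ->
  has_finite_cover C [set al *: u + (1 - al) *: x | u in P & x in A]
    (ln ((1 - mix_weight al k) * expR e2 + mix_weight al k * expR e1)).
Proof.
move=> al0 al1 k0 e12 de1 de2 xu [n1 [B1 [B1I cov1 diam1]]]
  [n2 [B2 [B2I cov2 diam2]]].
pose cell (ij : 'I_n1 * 'I_n2) :=
  [set al *: u + (1 - al) *: x | u in B1 ij.1 `&` P & x in B2 ij.2 `&` A].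
exists #|{: 'I_n1 * 'I_n2}|, (fun l => cell (enum_val l)); split.
- move=> l _ [u [B1u _] [x [B2x _] <-]].
  by apply: interior_mix => //; [exact: B1I B1u | exact: interior_subset (B2I _ _ B2x)].
- move=> _ [u Pu [x Ax <-]]; have [i ui] := cov1 u Pu; have [j xj] := cov2 x Ax.
  by exists (enum_rank (i, j)); rewrite enum_rankK; exists u => //; exists x.
- move=> l _ _ [u [B1u Pu] [x [B2x Ax] <-]] [u' [B1u' Pu'] [x' [B2x' Ax'] <-]].
  apply: thompson_le_ln; apply: thompson_set_mix_improved; rewrite ?ler_expR //.
  + exact: ltW.
  + by apply: thompson_lt_expR; [exact: B1I B1u | exact: B1I B1u' |];
       have := diam1 _ _ _ B1u B1u'; lra.
  + by apply: thompson_lt_expR; [exact: B2I B2x | exact: B2I B2x' |];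
       have := diam2 _ _ _ B2x B2x'; lra.
  + exact: xu.
  + exact: xu.
Qed.

Lemma mix_radii (c d t : R) : 0 < c -> c <= 1 -> 0 < d -> d < t ->
  exists e1 e2 : R, [/\ d < e1, t < e2, e1 <= e2 &
    0 < ln ((1 - c) * expR e2 + c * expR e1) < t].
Proof.
move=> c0 c1 d0 dt; pose e1 := (d + t) / 2; pose b1 := expR e1; pose E := expR t.
have b1E : b1 < E by rewrite ltr_expR /e1; lra.
have b1_gt1 : 1 < b1 by rewrite expR_gt1 /e1; lra.
pose b2 := E + c * (E - b1) / 2.
have Eb2 : E < b2.
  have : 0 < c * (E - b1) by rewrite mulr_gt0 // subr_gt0.
  rewrite /b2; lra.
have b20 : 0 < b2 by have : 0 < E := expR_gt0 t; lra.
exists e1, (ln b2); split.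
- by rewrite /e1; lra.
- by rewrite -ltr_expR lnK.
- by rewrite -ler_expR lnK // ltW //; apply: lt_trans b1E Eb2.
- have b1b2 : 0 <= (1 - c) * (b2 - b1).
    by rewrite mulr_ge0 // subr_ge0 //; apply/ltW/(lt_trans b1E Eb2).
  have gain : 0 < c * (E - b1) * (1 + c).
    by rewrite !mulr_gt0 ?subr_gt0 //; lra.
  rewrite lnK // -/b1; apply/andP; split; first by apply: ln_gt0; lra.
  by rewrite -ltr_expR lnK ?posrE -/b1 -/E; [rewrite /b2; lra | lra].
Qed.

Lemma dT_continuous_mix (f : V -> V) (al : R) : 0 <= al -> al <= 1 ->
  (forall x, interior C x -> interior C (f x)) ->
  dT_continuous_on C (interior C) f ->
  dT_continuous_on C (interior C) (fun x => al *: f x + (1 - al) *: x).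
Proof.
move=> al0 al1 fI fc x ix e e0; have [del del0 hdel] := fc x ix e e0.
exists (Num.min del e) => [|y iy]; first by rewrite lt_min del0 e0.
rewrite lt_min => /andP[xy_del xy_e].
by apply: thompson_mix_lt => //; [exact: fI | exact: fI | exact: hdel].
Qed.

Lemma tau_mix_lt (f : V -> V) (A : set V) (al : R) : 0 < al -> al <= 1 ->
  (forall x, interior C x -> interior C (f x)) ->
  A `<=` interior C -> dT_bounded C A -> (0 < tau C A)%E ->
  (tau C (f @` A) < tau C A)%E ->
  (tau C ((fun x => (al *: f x + (1 - al) *: x)%R) @` A) < tau C A)%E.
Proof.
move=> al0 al1 fI AI Abd tA tfA; have [t t0 tE] := tau_bounded_fin AI Abd tA.
have [x0 Ax0] := tau_gt0_nonempty tA; have ix0 := AI x0 Ax0.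
rewrite tE in tfA *; have [d1 [d10 d1t cov1]] := cover_of_tau_lt tfA.
have [m m0 fA_ge] := cover_lower_bound cov1 ix0.
have [M hM] := Abd; pose g := expR (M + 1); have g0 : 0 < g := expR_gt0 _.
have A_le x : A x -> cone_le C x (g *: x0).
  move=> Ax; have /thompson_setP[] // : thompson_set x0 x g.
  by apply: thompson_lt_expR; [| exact: AI |] => //; have := hM x0 x Ax0 Ax; lra.
pose k := m / g; have k0 : 0 < k by rewrite divr_gt0.
have fA_ge_A u x : (f @` A) u -> A x -> cone_le C (k *: x) u.
  move=> fAu Ax; apply: cone_le_trans (fA_ge u fAu).
  have -> : m *: x0 = k *: (g *: x0) by rewrite scalerA /k mulfVK ?gt_eqF.
  by apply: cone_leZ; [exact: ltW | exact: A_le].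
have c0 := mix_weight_gt0 al0 al1 k0; have c1 := mix_weight_le1 (ltW al0) al1 k0.
have [e1 [e2 [d1e1 te2 e12 /andP[D0 Dt]]]] := mix_radii c0 c1 d10 d1t.
have [d2 [_ d2e2 cov2]] : exists d2 : R, [/\ 0 < d2, d2 < e2 & has_finite_cover C A d2].
  by apply: cover_of_tau_lt; rewrite tE lte_fin.
apply: le_lt_trans (_ : _ <= (ln _)%:E)%E _; last by rewrite lte_fin; exact: Dt.
apply: tau_le_cover D0 _; apply: cover_sub (cover_mix al0 al1 k0 e12 d1e1 d2e2 fA_ge_A cov1 cov2).
by move=> _ [a Aa <-]; exists (f a); [exists a | exists a].
Qed.

End ThompsonCone.

Theorem corollary2p6 (R : realType) (V : completeNormedModType R) (C : set V) :
  closed_cone C -> normal_cone C -> (exists x, interior C x) ->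
  forall f : V -> V, tau_condensing C (interior C) f ->
  forall alpha : R, 0 < alpha -> alpha < 1 ->
  tau_condensing C (interior C) (fun x => alpha *: f x + (1 - alpha) *: x).
Proof.
move=> [_ C_conv C_scale _] _ _ f [fI fc fcond] al al0 al1.
have al_le1 : al <= 1 by exact: ltW.
split.
- move=> x ix; apply: interior_mix => //; [exact: fI | exact: interior_subset].
- exact: dT_continuous_mix (ltW al0) al_le1 fI fc.
- move=> A AI Abd tA; apply: tau_mix_lt => //; exact: fcond.
Qed.
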